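(* Let $n\le m$, let $\mathbf g\in\mathbb F_{q^m}^n$ have $\mathbb F_q$-linearly independent coordinates, let $1\le k\le n$, let $V\subseteq\mathbb F_{q^m}$ be an $\mathbb F_q$-subspace of dimension $s$ with $0<s<m$, and let $B$ be an $\mathbb F_q$-basis of $\mathbb F_{q^m}$. (1) If $m=n$, then $\mathrm{Stab}_R\bigl(\phi_B^{\mathrm{mat}}(\mathcal G(\mathbf g,k)\cap V^n)\bigr)$ contains an $\mathbb F_q$-subalgebra isomorphic to $\mathbb F_{q^m}$; in particular its $\mathbb F_q$-dimension is at least $m$. (2) For every $\mathbb F_q$-linear code $\mathcal C\subseteq\mathbb F_{q^m}^n$, $\dim_{\mathbb F_q}\mathrm{Ann}_L\bigl(\phi_B^{\mathrm{mat}}(\mathcal C\cap V^n)\bigr)\ge m(m-s)$, and consequently $\dim_{\mathbb F_q}\mathrm{Stab}_L\bigl(\phi_B^{\mathrm{mat}}(\mathcal C\cap V^n)\bigr)\ge m(m-s)+1$.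
   Context: For $B=(b_1,\dots,b_m)$ an $\mathbb F_q$-basis of $\mathbb F_{q^m}$, $\phi_B:\mathbb F_{q^m}\to\mathbb F_q^m$ maps $x=\sum_j x_jb_j$ to $(x_1,\dots,x_m)$, and $\phi_B^{\mathrm{mat}}:\mathbb F_{q^m}^n\to\mathbb F_q^{m\times n}$ maps $(x_1,\dots,x_n)$ to the $m\times n$ matrix whose $i$-th column is $\phi_B(x_i)^\top$. The Gabidulin code $\mathcal G(\mathbf g,k)$ is the $\mathbb F_{q^m}$-linear code generated by the rows of $(g_j^{q^i})_{0\le i<k,\,1\le j\le n}$. $V^n=V\times\cdots\times V$. For a matrix code $\mathcal M\subseteq\mathbb F_q^{m\times n}$: $\mathrm{Stab}_L(\mathcal M)=\{\mathbf P\in\mathbb F_q^{m\times m}:\mathbf P\mathcal M\subseteq\mathcal M\}$, $\mathrm{Stab}_R(\mathcal M)=\{\mathbf N\in\mathbb F_q^{n\times n}:\mathcal M\mathbf N\subseteq\mathcal M\}$, $\mathrm{Ann}_L(\mathcal M)=\{\mathbf A\in\mathbb F_q^{m\times m}:\mathbf A\mathbf C=\mathbf 0\ \forall\mathbf C\in\mathcal M\}$. *)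

From HB Require Import structures.
From mathcomp Require Import all_boot all_order all_algebra all_fingroup all_field.
Set Implicit Arguments. Unset Strict Implicit. Unset Printing Implicit Defensive.
Import GRing.Theory.
Local Open Scope ring_scope.

(* F plays F_q (q = #|F|), L : fieldExtType F of dimension m plays F_{q^m}.
   Vectors of L^n are {ffun 'I_n -> L} (an F-vector space). *)

Definition phiB (F : fieldType) (L : fieldExtType F) (m : nat)
  (B : m.-tuple L) (x : L) : 'rV[F]_m := \row_(i < m) coord B i x.

Definition phiBmat (F : fieldType) (L : fieldExtType F) (m n : nat)
  (B : m.-tuple L) (c : {ffun 'I_n -> L}) : 'M[F]_(m, n) :=
  \matrix_(i < m, j < n) coord B i (c j).

Definition gabidulin (F : finFieldType) (L : fieldExtType F) (n : nat)
  (g : n.-tuple L) (k : nat) (c : {ffun 'I_n -> L}) : Prop :=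
  exists a : 'I_k -> L,
    forall j : 'I_n, c j = \sum_(i < k) a i * (tnth g j) ^+ (#|F| ^ i).

Definition inVn (F : fieldType) (L : fieldExtType F) (n : nat)
  (V : {vspace L}) (c : {ffun 'I_n -> L}) : bool := [forall j, c j \in V].

Definition matcode (F : fieldType) (L : fieldExtType F) (m n : nat)
  (B : m.-tuple L) (S : {ffun 'I_n -> L} -> Prop) (V : {vspace L})
  (M : 'M[F]_(m, n)) : Prop :=
  exists c, S c /\ inVn V c /\ M = phiBmat B c.

Definition StabL (F : fieldType) (m n : nat) (M : 'M[F]_(m, n) -> Prop)
  (P : 'M[F]_m) : Prop := forall C, M C -> M (P *m C).
Definition StabR (F : fieldType) (m n : nat) (M : 'M[F]_(m, n) -> Prop)
  (N : 'M[F]_n) : Prop := forall C, M C -> M (C *m N).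
Definition AnnL (F : fieldType) (m n : nat) (M : 'M[F]_(m, n) -> Prop)
  (A : 'M[F]_m) : Prop := forall C, M C -> A *m C = 0.

(* "the F-dimension of the (subspace) S is at least d":
   S contains an F-subspace of dimension >= d *)
Definition dim_ge (F : fieldType) (vT : vectType F) (S : vT -> Prop) (d : nat)
  : Prop := exists U : {vspace vT}, (d <= \dim U)%N /\ forall x, x \in U -> S x.

(* S (a set of n x n matrices) contains an F-subalgebra isomorphic to L:
   an injective F-linear multiplicative map L -> 'M_n landing in S. *)
Definition contains_algebra_iso (F : fieldType) (L : fieldExtType F) (n : nat)
  (S : 'M[F]_n -> Prop) : Prop :=
  exists f : L -> 'M[F]_n,
    [/\ injective f,
        forall (a : F) (x y : L), f (a *: x + y) = a *: f x + f y,
        forall x y : L, f (x * y) = f x *m f y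
      & forall x, S (f x)].

(* Part (1): when m = n the coordinates of g form a basis of L, and the matrix
   M_a of multiplication by a in that basis acts on codewords by F-linear
   combinations of columns, sending c_j to a c_j.  As the q^i-th power map is
   F-linear, a codeword sum_i b_i g_j^(q^i) is sent to
   sum_i (b_i a^(q^i)) g_j^(q^i), again a codeword, and V^n is preserved; so
   a |-> M_a embeds L into the right stabilizer.
   Part (2): a matrix with all columns in V factors as phi_B(c) = R X, where
   the columns of R are the B-coordinates of a basis of V.  The kernel of
   A |-> A R, of dimension at least m^2 - m s, therefore annihilates the code,
   and adding the identity (not in the kernel since R <> 0) keeps mapping the
   F-linear code into itself. *)

From HB Require Import structures.
From mathcomp Require Import all_boot all_order all_algebra all_fingroup all_field.
From mathcomp Require Import abelian.
Set Implicit Arguments.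
Unset Strict Implicit.
Unset Printing Implicit Defensive.
Import GRing.Theory.
Local Open Scope ring_scope.

Lemma pchar_nat_card (F : finFieldType) : [pchar F].-nat #|F|.
Proof.
have [p _ pchF] := finPcharP F.
rewrite (eq_pnat _ (pcharf_eq pchF)) -cardsT.
exact/abelem_pgroup/fin_ring_pchar_abelem.
Qed.

Lemma expf_card_expn (F : finFieldType) (a : F) i : a ^+ (#|F| ^ i) = a.
Proof. by elim: i => [|i IH]; rewrite ?expr1 // expnSr exprM IH expf_card. Qed.

Section QFrobenius.
Variables (F : finFieldType) (L : comAlgType F) (i : nat).

Definition qfrob (x : L) : L := x ^+ (#|F| ^ i).

Lemma qfrob_is_linear : linear qfrob.
Proof.
move=> a x y; rewrite /qfrob exprDn_pchar ?exprZn ?expf_card_expn //.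
by rewrite (eq_pnat _ (pchar_lalg _)) pnatX pchar_nat_card.
Qed.

HB.instance Definition _ := GRing.isLinear.Build F L L *:%R qfrob qfrob_is_linear.

End QFrobenius.

Section DimensionBounds.
Variables (K : fieldType) (uT vT : vectType K).

Lemma dim_ge_injective (f : {linear uT -> vT}) (S : vT -> Prop) :
  injective f -> (forall x, S (f x)) -> dim_ge S (\dim {:uT}).
Proof.
move=> inj_f Sf; exists (limg (linfun f)); split.
  rewrite limg_dim_eq //; apply/eqP; rewrite capfv; apply/lker0P => x y.
  by rewrite !lfunE; apply: inj_f.
by move=> _ /memv_imgP [x _ ->]; rewrite lfunE.
Qed.

Lemma dim_lker_ge (f : 'Hom(uT, vT)) : (\dim {:uT} - \dim {:vT} <= \dim (lker f))%N.
Proof.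
rewrite -(limg_ker_dim f fullv) capfv leq_subLR addnC leq_add2r.
exact/dimvS/subvf.
Qed.

Lemma dimv_add_line (U : {vspace vT}) x :
  x \notin U -> \dim (U + <[x]>) = (\dim U).+1.
Proof.
move=> xU; have x0 : x != 0 by apply: contraNneq xU => ->; rewrite mem0v.
rewrite dimv_disjoint_sum ?dim_vline ?x0 ?addn1 //.
apply/eqP; rewrite -subv0; apply/subvP => y /memv_capP [yU /vlineP [a ya]].
rewrite memv0 ya scaler_eq0; apply: contraLR xU => /norP [a0 _].
by rewrite -[x](scalerK a0) memvZ -?ya.
Qed.

End DimensionBounds.

Section MatrixCode.
Variables (F : fieldType) (L : fieldExtType F) (m n : nat) (B : m.-tuple L).

Definition mulmx_ffun (c : {ffun 'I_n -> L}) (N : 'M[F]_n) : {ffun 'I_n -> L} :=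
  [ffun j => \sum_l N l j *: c l].

Lemma phiBmat_mulmx c N : phiBmat B c *m N = phiBmat B (mulmx_ffun c N).
Proof.
apply/matrixP => i j; rewrite !mxE ffunE linear_sum.
by apply: eq_bigr => l _; rewrite linearZ /= mxE mulrC.
Qed.

Lemma phiBmatZ a (c : {ffun 'I_n -> L}) : a *: phiBmat B c = phiBmat B (a *: c).
Proof. by apply/matrixP => i j; rewrite !mxE ffunE linearZ. Qed.

Variable V : {vspace L}.

Lemma inVn_mulmx c N : inVn V c -> inVn V (mulmx_ffun c N).
Proof.
move=> /forallP Vc; apply/forallP => j; rewrite ffunE.
by apply: rpred_sum => l _; apply/rpredZ/Vc.
Qed.

Lemma inVnZ a (c : {ffun 'I_n -> L}) : inVn V c -> inVn V (a *: c).
Proof. by move=> /forallP Vc; apply/forallP => j; rewrite ffunE rpredZ. Qed.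

Definition vbasis_mx : 'M[F]_(m, \dim V) := \matrix_(i, j) coord B i (vbasis V)`_j.

Lemma phiBmat_inVn c : inVn V c ->
  phiBmat B c = vbasis_mx *m \matrix_(i < \dim V, j < n) coord (vbasis V) i (c j).
Proof.
move=> /forallP Vc; apply/matrixP => i j; rewrite !mxE.
rewrite {1}(coord_vbasis (Vc j)) linear_sum; apply: eq_bigr => l _.
by rewrite linearZ /= !mxE mulrC.
Qed.

Definition annV : {vspace 'M[F]_m} := lker (linfun (mulmxr vbasis_mx)).

Lemma mem_annV A : (A \in annV) = (A *m vbasis_mx == 0).
Proof. by rewrite memv_ker lfunE. Qed.

Lemma AnnL_annV (S : {ffun 'I_n -> L} -> Prop) A :
  A \in annV -> AnnL (matcode B S V) A.
Proof.
rewrite mem_annV => /eqP AV _ [c [_ [Vc ->]]].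
by rewrite phiBmat_inVn // mulmxA AV mul0mx.
Qed.

Lemma dim_annV : (m * (m - \dim V) <= \dim annV)%N.
Proof.
have := dim_lker_ge (linfun (mulmxr vbasis_mx) : 'Hom('M[F]_m, _)).
by rewrite !dimvf !dim_matrix mulnBr.
Qed.

Lemma StabL_annV_line (C : {vspace {ffun 'I_n -> L}}) A :
  A \in (annV + <[1%:M]>)%VS -> StabL (matcode B (fun c => c \in C) V) A.
Proof.
case/memv_addP => P PV [_ /vlineP [a ->] ->] _ [c [Cc [Vc ->]]].
exists (a *: c); split; [exact: memvZ | split; first exact: inVnZ].
rewrite mulmxDl (AnnL_annV (S := fun c => c \in C) PV); last by exists c.
by rewrite add0r -scalemxAl mul1mx phiBmatZ.
Qed.

Hypotheses (basisB : basis_of fullv B) (V_neq0 : (0 < \dim V)%N).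

Lemma one_notin_annV : 1%:M \notin annV.
Proof.
rewrite mem_annV mul1mx; apply/negP => /eqP V0.
have : (vbasis V)`_0 != 0.
  by apply/(free_not0 (basis_free (vbasisP V)))/mem_nth; rewrite size_tuple.
apply/negP; rewrite negbK (coord_basis basisB (memvf (vbasis V)`_0)).
apply/eqP/big1 => i _.
by move/matrixP: V0 => /(_ i (Ordinal V_neq0)); rewrite !mxE => ->; rewrite scale0r.
Qed.

End MatrixCode.

Section MultiplicationMatrix.
Variables (F : fieldType) (L : fieldExtType F) (n : nat) (g : n.-tuple L).
Hypothesis basis_g : basis_of fullv g.

Definition mul_mx (a : L) : 'M[F]_n := \matrix_(l, j) coord g l (a * tnth g j).

Lemma mul_mx_is_linear : linear mul_mx.
Proof.
move=> a x y; apply/matrixP => l j.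
by rewrite !mxE mulrDl -scalerAl linearD linearZ.
Qed.

HB.instance Definition _ := GRing.isLinear.Build F L 'M[F]_n *:%R mul_mx mul_mx_is_linear.

Lemma coord_expansion (v : L) : v = \sum_l coord g l v *: tnth g l.
Proof.
rewrite {1}(coord_basis basis_g (memvf v)).
by apply: eq_bigr => l _; rewrite (tnth_nth 0).
Qed.

Lemma mul_mxM x y : mul_mx (x * y) = mul_mx x *m mul_mx y.
Proof.
apply/matrixP => l j; rewrite !mxE -mulrA {1}(coord_expansion (y * tnth g j)).
rewrite mulr_sumr linear_sum; apply: eq_bigr => p _.
by rewrite -scalerAr linearZ /= !mxE mulrC.
Qed.

Lemma mul_mx_inj : (0 < n)%N -> injective mul_mx.
Proof.
move=> n_gt0 x y /eqP; rewrite -subr_eq0 -raddfB => /eqP/matrixP xy0.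
have g0 : tnth g (Ordinal n_gt0) != 0.
  by apply/(free_not0 (basis_free basis_g))/mem_tnth.
suff : (x - y) * tnth g (Ordinal n_gt0) = 0.
  by move/eqP; rewrite mulf_eq0 (negbTE g0) orbF subr_eq0 => /eqP.
rewrite (coord_expansion (_ * _)); apply: big1 => l _.
by have := xy0 l (Ordinal n_gt0); rewrite !mxE => ->; rewrite scale0r.
Qed.

End MultiplicationMatrix.

Section GabidulinStabilizer.
Variables (F : finFieldType) (L : fieldExtType F) (n k : nat) (g : n.-tuple L).
Hypothesis basis_g : basis_of fullv g.

Lemma mul_mx_column a j : \sum_l mul_mx g a l j *: tnth g l = a * tnth g j.
Proof.
by rewrite [RHS](coord_expansion basis_g); apply: eq_bigr => l _; rewrite mxE.
Qed.

Lemma gabidulin_mulmx_ffun a c :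
  gabidulin g k c -> gabidulin g k (mulmx_ffun c (mul_mx g a)).
Proof.
case=> b Dc; exists (fun i => b i * qfrob i a) => j; rewrite ffunE.
under eq_bigr => l _ do rewrite Dc scaler_sumr.
rewrite exchange_big; apply: eq_bigr => i _ /=.
under eq_bigr => l _ do rewrite scalerAr.
rewrite -mulr_sumr -mulrA; congr (_ * _).
have -> : \sum_l mul_mx g a l j *: tnth g l ^+ (#|F| ^ i)
        = qfrob i (\sum_l mul_mx g a l j *: tnth g l).
  by rewrite linear_sum; apply: eq_bigr => l _; rewrite linearZ.
by rewrite mul_mx_column /qfrob exprMn.
Qed.

Lemma StabR_mul_mx m (B : m.-tuple L) V a :
  StabR (matcode B (gabidulin g k) V) (mul_mx g a).
Proof.
move=> _ [c [Gc [Vc ->]]]; exists (mulmx_ffun c (mul_mx g a)).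
split; first exact: gabidulin_mulmx_ffun.
by split; [exact: inVn_mulmx | exact: phiBmat_mulmx].
Qed.

End GabidulinStabilizer.

Theorem mainTheorem5 (F : finFieldType) (L : fieldExtType F) (m n k s : nat)
  (g : n.-tuple L) (V : {vspace L}) (B : m.-tuple L) :
  \dim {: L} = m ->
  (n <= m)%N ->
  free g ->
  (1 <= k <= n)%N ->
  \dim V = s -> (0 < s < m)%N ->
  basis_of fullv B ->
  (m = n ->
     contains_algebra_iso L (StabR (matcode B (gabidulin g k) V)) /\
     dim_ge (StabR (matcode B (gabidulin g k) V)) m)
  /\
  (forall C : {vspace {ffun 'I_n -> L}},
     dim_ge (AnnL (matcode B (fun c => c \in C) V)) (m * (m - s)) /\
     dim_ge (StabL (matcode B (fun c => c \in C) V)) (m * (m - s) + 1)).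
Proof.
move=> dimL _ free_g _ dimV /andP [s_gt0 s_lt_m] basisB; split=> [mn | C].
  have basis_g : basis_of fullv g.
    by rewrite basisEfree free_g subvf size_tuple dimL mn /=.
  have n_gt0 : (0 < n)%N by rewrite -mn (ltn_trans s_gt0).
  have inj_mul := mul_mx_inj basis_g n_gt0.
  split.
    exists (mul_mx g); split=> //; [exact: linearP | exact: mul_mxM | ].
    exact: StabR_mul_mx.
  rewrite -[X in dim_ge _ X]dimL.
  by apply: dim_ge_injective inj_mul _ => a; apply: StabR_mul_mx.
have V_neq0 : (0 < \dim V)%N by rewrite dimV.
split; [exists (annV B V) | exists (annV B V + <[1%:M]>)%VS]; split.
- by rewrite -dimV dim_annV.
- by move=> A; apply: AnnL_annV.
- by rewrite dimv_add_line ?one_notin_annV // addn1 ltnS -dimV dim_annV.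
- by move=> A; apply: StabL_annV_line.
Qed.
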